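(* Let $N \geq 1$ and $A \geq 0$ be integers, and suppose $A$ items are drawn uniformly at random with replacement from a sample of $N$ items (each draw independent and each item equally likely). Let $k$ be the number of distinct original items appearing among the $A$ draws, so that $$\mathbb{P}(k) = \frac{N^{\underline{k}}}{N^{A}} \left\{ {A \atop k} \right\}, \qquad k = 0,1,\dots,N.$$ Then for every integer $t \geq 0$, the $t$-th raw moment $\mu'_t = \mathbb{E}[k^t]$ satisfies $$\mu'_t = \sum_{k=0}^{N} k^t \frac{N^{\underline{k}}}{N^{A}} \left\{ {A \atop k} \right\} = \sum_{\substack{u,v,w \in \mathbb{N}_0 \\ u+v+w = t}} \binom{t}{u} (-1)^{v} \left\{ {v+w \atop v} \right\} N^{\underline{v}} (N-v)^{u} \Big(1 - \frac{v}{N}\Big)^{A}.$$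
   Context: $\mathbb{N}_0$ denotes the nonnegative integers. $N^{\underline{k}}$ is the falling factorial: $N^{\underline{k}} = N!/(N-k)!$ if $k \leq N$ and $0$ otherwise. $\left\{ {n \atop m} \right\}$ is the Stirling number of the second kind (the number of partitions of an $n$-element set into $m$ nonempty blocks), with $\left\{ {0 \atop 0} \right\} = 1$, $\left\{ {n \atop 0} \right\} = 0$ for $n > 0$, and $\left\{ {n \atop m} \right\} = 0$ for $m < 0$ or $m > n$. The convention $0^0 = 1$ is used. *)

From mathcomp Require Import all_boot all_order all_algebra.
Set Implicit Arguments. Unset Strict Implicit. Unset Printing Implicit Defensive.
Import GRing.Theory Num.Theory.

Definition stirling2 (n m : nat) : nat :=
  #|[set P : {set {set 'I_n}} | partition P [set: 'I_n] && (#|P| == m)]|.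

Definition ndistinct (N A : nat) (f : {ffun 'I_A -> 'I_N}) : nat :=
  #|f @: [set: 'I_A]|.

Local Open Scope ring_scope.

Definition raw_moment (N A t : nat) : rat :=
  (\sum_(f : {ffun 'I_A -> 'I_N}) ((ndistinct f) ^ t)%:R) / (N ^ A)%:R.

Definition probk (N A k : nat) : rat :=
  (N ^_ k)%:R / (N ^ A)%:R * (stirling2 A k)%:R.

From mathcomp Require Import all_boot all_order all_algebra.
From mathcomp Require Import ring zify.
Import GRing.Theory Num.Theory.

Set Implicit Arguments.
Unset Strict Implicit.
Unset Printing Implicit Defensive.

(* Grouping the maps f : 'I_A -> 'I_N by their fibre partition shows that exactly
   N^{\underline k} S(A, k) of them have k distinct values, which gives the first
   equality.  For the second, #|im f|^t counts the maps g : 'I_t -> 'I_N with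
   im g \subset im f.  Exchanging the sums and applying inclusion-exclusion to
   "im g \subset im f" and then to "Y \subset im g" leaves a sum over v = #|Y| of
   (-1)^v C(N, v) (N - v)^A times the number of t-maps covering a v-set.  Splitting
   (N - j)^t = ((v - j) + (N - v))^t binomially rewrites that number as
   \sum_u C(t, u) (N - v)^u v! S(t - u, v), and v! C(N, v) = N^{\underline v}. *)

Section PreimPartition.
Variables (D T : finType).

Lemma card_preim_partition (f : D -> T) :
  #|preim_partition f [set: D]| = #|f @: [set: D]|.
Proof.
have -> : preim_partition f [set: D] = (fun a => [set y | f y == a]) @: (f @: [set: D]).
  rewrite /preim_partition /equivalence_partition -imset_comp.
  by apply: eq_imset => x /=; apply/setP => y; rewrite !inE eq_sym.
apply: card_in_imset => a b /imsetP[x _ ->] /imsetP[z _ ->] fibers_eq.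
have : x \in [set y | f y == f x] by rewrite inE.
by rewrite fibers_eq inE => /eqP.
Qed.

(* The functions with fiber partition P correspond to the injections of the blocks of P into T. *)
Lemma card_ffun_preim_partition (P : {set {set D}}) : partition P [set: D] ->
  #|[set f : {ffun D -> T} | preim_partition f [set: D] == P]| = #|T| ^_ #|P|.
Proof.
move=> partP; have [/eqP covP triP n0P] := and3P partP.
have memP x : pblock P x \in P by apply: pblock_mem; rewrite covP inE.
pose K := {B : {set D} | B \in P}.
pose block x : K := exist _ (pblock P x) (memP x).
have nonempty (k : K) : exists x, x \in val k.
  by apply/set0Pn; apply: contraNneq n0P => <-; exact: (valP k).
have block_mem (k : K) x : x \in val k -> block x = k.
  by move=> xk; apply: val_inj; exact: def_pblock triP (valP k) xk.
pose lift (h : {ffun K -> T}) : {ffun D -> T} := [ffun x => h (block x)].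
have lift_inj : injective lift.
  move=> h1 h2 /ffunP eq12; apply/ffunP => k; have [x xk] := nonempty k.
  by have := eq12 x; rewrite !ffunE (block_mem k x xk).
rewrite -[#|P|]card_sig -card_inj_ffuns -(card_imset _ lift_inj).
apply: eq_card => f; rewrite inE; apply/idP/imsetP.
- move/eqP => Pf.
  have same_block x y : (y \in pblock P x) = (f x == f y).
    rewrite -Pf; apply: pblock_equivalence_partition; rewrite ?inE //.
    by split => // /eqP ->.
  pose rep (k : K) := xchoose (nonempty k).
  have rep_block (k : K) : block (rep k) = k by apply: block_mem; exact: xchooseP.
  exists [ffun k => f (rep k)].
    rewrite inE; apply/injectiveP => k1 k2; rewrite !ffunE => eq_f.
    rewrite -(rep_block k1) -(rep_block k2); apply: val_inj => /=.
    by apply/esym/same_pblock => //; rewrite same_block eq_f.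
  apply/ffunP => x; rewrite !ffunE; apply/eqP; rewrite -same_block.
  exact: (xchooseP (nonempty (block x))).
- case=> h; rewrite inE => /injectiveP h_inj ->.
  rewrite -{1}(preim_partition_pblock partP); apply/eqP.
  apply: eq_imset => x; apply/setP => y; rewrite !inE !ffunE (inj_eq h_inj).
  by apply/eqP/eqP => [[] | eq_pblock]; last exact: val_inj.
Qed.

End PreimPartition.

Lemma card_ffun_card_image (n : nat) (T : finType) k :
  #|[set f : {ffun 'I_n -> T} | #|f @: [set: 'I_n]| == k]| =
  (#|T| ^_ k * stirling2 n k)%N.
Proof.
rewrite -sum1_card (partition_big (fun f : {ffun 'I_n -> T} => preim_partition f setT)
  (fun P => partition P [set: 'I_n] && (#|P| == k))) /=; last first.
  by move=> f; rewrite inE preim_partitionP card_preim_partition.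
rewrite /stirling2 mulnC -sum_nat_const.
apply: eq_big => [P|P /andP[partP /eqP <-]]; first by rewrite inE.
rewrite -card_ffun_preim_partition // -sum1_card.
apply: eq_bigl => f; rewrite !inE -card_preim_partition.
by rewrite andb_idl // => /eqP ->.
Qed.

Lemma stirling2_small m v : (m < v)%N -> stirling2 m v = 0%N.
Proof.
move=> lt_mv; have := card_ffun_card_image m 'I_v v; rewrite card_ord ffactnn.
rewrite eq_card0 => [/esym/eqP|f]; first by rewrite muln_eq0 (gtn_eqF (fact_gt0 v)) => /eqP.
rewrite !inE; apply/negbTE; rewrite neq_ltn (leq_ltn_trans (leq_imset_card _ _)) //.
by rewrite cardsT card_ord.
Qed.

Local Open Scope ring_scope.

Lemma sum_by_nat_value (R : nmodType) (I : finType) (P : pred I) (g : I -> nat)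
    n (F : nat -> R) :
  (forall i, P i -> g i <= n)%N ->
  \sum_(i | P i) F (g i) = \sum_(0 <= k < n.+1) F k *+ #|[set i | P i && (g i == k)]|.
Proof.
move=> g_le; rewrite big_mkord.
rewrite (partition_big (fun i => (inord (g i) : 'I_n.+1)) xpredT) //=.
apply: eq_bigr => k _; rewrite -sumr_const; apply: eq_big => i.
  rewrite inE; case Pi: (P i) => //=.
  by rewrite -val_eqE /= inordK // ltnS; apply: g_le.
by case/andP => Pi; rewrite -val_eqE /= inordK ?ltnS ?g_le // => /eqP ->.
Qed.

Lemma sum_subsets_by_card (R : nmodType) (T : finType) (Z : {set T}) (F : nat -> R) :
  \sum_(Y : {set T} | Y \subset Z) F #|Y| = \sum_(0 <= k < #|Z|.+1) F k *+ 'C(#|Z|, k).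
Proof.
rewrite (@sum_by_nat_value _ _ _ _ #|Z|) => [|Y]; last exact: subset_leq_card.
by apply: eq_bigr => k _; rewrite cards_draws.
Qed.

Lemma sum_subsets_sign (R : pzRingType) (T : finType) (Z : {set T}) :
  \sum_(Y : {set T} | Y \subset Z) (-1) ^+ #|Y| = (Z == set0)%:R :> R.
Proof.
rewrite (sum_subsets_by_card Z (fun k => (-1) ^+ k)) -cards_eq0.
have := exprBn_comm #|Z| (commr_refl (1 : R)); rewrite subrr expr0n => ->.
by rewrite big_mkord; apply: eq_bigr => i _; rewrite !expr1n !mulr1.
Qed.

Lemma natr_card (R : pzSemiRingType) (I : finType) (A : {pred I}) :
  #|A|%:R = \sum_i (i \in A)%:R :> R.
Proof.
by rewrite -sum1_card natr_sum big_mkcond; apply: eq_bigr => i _; case: (i \in A).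
Qed.

Lemma ffun_on_imset (D T : finType) (X : {set T}) (f : {ffun D -> T}) :
  (f \in ffun_on X) = (f @: [set: D] \subset X).
Proof.
apply/ffun_onP/subsetP => [f_X _ /imsetP[x _ ->] | im_X x]; first exact: f_X.
by apply: im_X; rewrite imset_f.
Qed.

Lemma card_ffun_cover (R : pzRingType) (D T : finType) (X : {set T}) :
  #|[set f : {ffun D -> T} | X \subset f @: [set: D]]|%:R =
  \sum_(Y : {set T} | Y \subset X) (-1) ^+ #|Y| * ((#|T| - #|Y|) ^ #|D|)%:R :> R.
Proof.
have card_avoid (Y : {set T}) : ((#|T| - #|Y|) ^ #|D|)%:R =
    \sum_(f : {ffun D -> T}) (f \in ffun_on (~: Y))%:R :> R.
  by rewrite -natr_card card_ffun_on [#|~: Y|]cardsCs setCK.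
under eq_bigr do rewrite card_avoid mulr_sumr.
rewrite exchange_big natr_card; apply: eq_bigr => f _ /=.
rewrite inE -setD_eq0 -sum_subsets_sign [RHS]big_mkcond [LHS]big_mkcond.
apply: eq_bigr => Y _; rewrite setDE subsetI subsetC ffun_on_imset.
by case: (Y \subset X); case: (_ \subset _); rewrite ?mulr1 ?mulr0.
Qed.

(* The number of maps from an m-set to an n-set whose image contains a given v-subset. *)
Definition cover_count (R : pzRingType) (n m v : nat) : R :=
  \sum_(0 <= j < v.+1) ((-1) ^+ j * ((n - j) ^ m)%:R) *+ 'C(v, j).

Lemma card_ffun_cover_count (R : pzRingType) (D T : finType) (X : {set T}) :
  #|[set f : {ffun D -> T} | X \subset f @: [set: D]]|%:R =
  cover_count R #|T| #|D| #|X|.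
Proof.
rewrite card_ffun_cover.
exact: (sum_subsets_by_card X (fun k => (-1) ^+ k * ((#|T| - k) ^ #|D|)%:R)).
Qed.

Lemma cover_countnn (R : pzRingType) m v :
  cover_count R v m v = (v`! * stirling2 m v)%:R.
Proof.
have := card_ffun_cover_count R 'I_m [set: 'I_v]; rewrite cardsT !card_ord => <-.
have := card_ffun_card_image m 'I_v v; rewrite card_ord ffactnn => <-.
congr (_%:R); apply: eq_card => f; rewrite !inE subTset eqEcard subsetT cardsT card_ord /=.
have im_le : (#|f @: [set: 'I_m]| <= v)%N by rewrite -[leqRHS](card_ord v) max_card.
by rewrite eq_sym eqn_leq im_le andbT.
Qed.

(* Expand (n - j)^t = ((v - j) + (n - v))^t binomially inside the alternating sum. *)
Lemma cover_count_binomial (R : comPzRingType) n t v : (v <= n)%N ->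
  cover_count R n t v =
  \sum_(0 <= u < t.+1) 'C(t, u)%:R * (n - v)%:R ^+ u * cover_count R v (t - u) v.
Proof.
move=> le_vn; under [RHS]eq_bigr do rewrite /cover_count mulr_sumr.
rewrite exchange_big_nat; apply: eq_big_nat => j /andP[_ lt_jv].
have -> : (n - j = (v - j) + (n - v))%N by lia.
rewrite natrX natrD exprDn big_mkord mulr_sumr -sumrMnl; apply: eq_bigr => u _.
by rewrite natrX; ring.
Qed.

Lemma sum_card_image_pow (R : pzSemiRingType) (T : finType) A t :
  \sum_(f : {ffun 'I_A -> T}) (#|f @: [set: 'I_A]| ^ t)%:R =
  \sum_(0 <= k < #|T|.+1) (k ^ t)%:R * (#|T| ^_ k * stirling2 A k)%:R :> R.
Proof.
rewrite (@sum_by_nat_value _ _ xpredT _ #|T| (fun k => (k ^ t)%:R)) => [|f _].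
  apply: eq_bigr => k _; rewrite mulr_natr -card_ffun_card_image.
  by congr (_ *+ _); apply: eq_card => f; rewrite !inE.
exact: max_card.
Qed.

Lemma natr_exp_card (R : pzSemiRingType) (E T : finType) (X : {set T}) :
  (#|X| ^ #|E|)%:R = \sum_(g : {ffun E -> T}) (g @: [set: E] \subset X)%:R :> R.
Proof.
rewrite -card_ffun_on natr_card.
by apply: eq_bigr => g _; rewrite ffun_on_imset.
Qed.

(* #|im f|^#|E| counts the maps g : E -> T with im g inside im f; then apply
   inclusion-exclusion over f, and again over g. *)
Lemma sum_card_image_pow_cover (R : pzRingType) (D E T : finType) :
  \sum_(f : {ffun D -> T}) (#|f @: [set: D]| ^ #|E|)%:R =
  \sum_(0 <= v < #|T|.+1)
    ((-1) ^+ v * ((#|T| - v) ^ #|D|)%:R * cover_count R #|T| #|E| v) *+ 'C(#|T|, v).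
Proof.
pose c (Y : {set T}) : R := (-1) ^+ #|Y| * ((#|T| - #|Y|) ^ #|D|)%:R.
have card_cover (X : {set T}) : \sum_(f : {ffun D -> T}) (X \subset f @: [set: D])%:R =
    \sum_(Y : {set T} | Y \subset X) c Y.
  by rewrite -card_ffun_cover natr_card; apply: eq_bigr => f _; rewrite inE.
under eq_bigr do rewrite natr_exp_card.
rewrite exchange_big /=.
under eq_bigr do rewrite card_cover big_mkcond /=.
rewrite exchange_big /=.
have := sum_subsets_by_card [set: T]
  (fun v => (-1) ^+ v * ((#|T| - v) ^ #|D|)%:R * cover_count R #|T| #|E| v).
rewrite cardsT => <-.
apply: eq_big => [Y|Y _]; first by rewrite subsetT.
rewrite -card_ffun_cover_count natr_card mulr_sumr; apply: eq_bigr => g _.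
by rewrite inE; case: (Y \subset _); rewrite ?mulr1 ?mulr0.
Qed.

Lemma raw_moment_probk N A t :
  raw_moment N A t = \sum_(0 <= k < N.+1) (k ^ t)%:R * probk N A k.
Proof.
rewrite /raw_moment /ndistinct sum_card_image_pow card_ord mulr_suml.
by apply: eq_bigr => k _; rewrite /probk natrM; ring.
Qed.

Lemma sumr_nat_widen (R : nmodType) n m (F : nat -> R) : (n <= m)%N ->
  (forall i, (n <= i < m)%N -> F i = 0) ->
  \sum_(0 <= i < n) F i = \sum_(0 <= i < m) F i.
Proof.
move=> le_nm F0; rewrite [RHS](@big_cat_nat _ _ _ n) ?leq0n //=.
by rewrite [X in _ + X]big_nat_cond [X in _ + X]big1 ?addr0 // => i /andP[/F0].
Qed.

Definition moment_term (R : numFieldType) (N A t u v : nat) : R :=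
  'C(t, u)%:R * (-1) ^+ v * (stirling2 (t - u) v)%:R * (N ^_ v)%:R
    * (N%:R - v%:R) ^+ u * (1 - v%:R / N%:R) ^+ A.

Lemma sum_moment_term (R : numFieldType) N A t v : (0 < N)%N -> (v <= N)%N ->
  ((-1) ^+ v * ((N - v) ^ A)%:R * cover_count R N t v) *+ 'C(N, v) / (N ^ A)%:R =
  \sum_(0 <= u < t.+1) moment_term R N A t u v.
Proof.
move=> N_gt0 le_vN; rewrite cover_count_binomial // mulr_sumr -sumrMnl mulr_suml.
apply: eq_bigr => u _; rewrite cover_countnn /moment_term.
have N_neq0 : (N%:R : R) != 0 by rewrite pnatr_eq0 -lt0n.
have -> : 1 - v%:R / N%:R = (N - v)%:R / (N%:R : R) by rewrite natrB // mulrBl divff.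
rewrite expr_div_n -bin_ffact !natrM -natrB // !natrX.
by rewrite -mulr_natr; ring.
Qed.

Lemma raw_moment_closed_form N A t : (0 < N)%N ->
  raw_moment N A t =
  \sum_(0 <= u < t.+1) \sum_(0 <= v < (t - u).+1) moment_term rat N A t u v.
Proof.
move=> N_gt0; rewrite /raw_moment /ndistinct.
have := sum_card_image_pow_cover rat 'I_A 'I_t 'I_N; rewrite !card_ord => ->.
rewrite mulr_suml.
under eq_big_nat => v /andP[_ lt_vN] do rewrite sum_moment_term //.
rewrite exchange_big_nat; apply: eq_big_nat => u _.
have le_N : (N.+1 <= (N + t).+1)%N by rewrite ltnS leq_addr.
have le_tu : ((t - u).+1 <= (N + t).+1)%N.
  by rewrite ltnS (leq_trans (leq_subr u t) (leq_addl N t)).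
rewrite (sumr_nat_widen le_N) => [|v /andP[lt_Nv _]]; last first.
  by rewrite /moment_term ffact_small ?mulr0 ?mul0r.
rewrite [RHS](sumr_nat_widen le_tu) // => v /andP[lt_tuv _].
by rewrite /moment_term stirling2_small ?mulr0 ?mul0r.
Qed.

Theorem mainTheorem1 (N A t : nat) (hN : (1 <= N)%N) :
  raw_moment N A t = \sum_(0 <= k < N.+1) (k ^ t)%:R * probk N A k /\
  \sum_(0 <= k < N.+1) (k ^ t)%:R * probk N A k =
  \sum_(0 <= u < t.+1) \sum_(0 <= v < (t - u).+1)
     let w := (t - u - v)%N in
     ('C(t, u))%:R * (-1) ^+ v * (stirling2 (v + w) v)%:R * (N ^_ v)%:R
       * (N%:R - v%:R : rat) ^+ u * (1 - v%:R / N%:R) ^+ A.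
Proof.
split; first exact: raw_moment_probk.
rewrite -raw_moment_probk raw_moment_closed_form //.
rewrite /moment_term; apply: eq_big_nat => u _.
apply: eq_big_nat => v /andP[_]; rewrite ltnS => le_v_tu.
by rewrite -[X in stirling2 X _](subnKC le_v_tu).
Qed.
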